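(* For any two polytopes $P,Q\subseteq\mathbb{R}^n$ we have $\mathrm{Sh}(P+Q)=\mathrm{Sh}(P)+\mathrm{Sh}(Q)$. Consequently $P\mapsto\mathrm{Sh}(P)$ induces a group homomorphism $\mathrm{Sh}:\mathcal{P}(\mathbb{R}^n)\to\mathcal{P}(\mathbb{R}^n)$.
   Context: Polytopes are convex hulls of nonempty finite sets; $P+Q$ is the Minkowski sum and $\mathcal{P}(\mathbb{R}^n)$ the Grothendieck group of polytopes. For $S\subseteq\mathbb{R}^n$, $\mathrm{hull}(S)$ is its convex hull and $h(S)=\min\{x_n: x\in S\}$ its height. For $t\in\mathbb{R}$, $c_t:\mathbb{R}^n\to\mathbb{R}^n$, $(x_1,\dots,x_n)\mapsto(x_1,\dots,x_{n-1},t)$. The shadow of a polytope $P$ is $\mathrm{Sh}(P)=\mathrm{hull}(P\cup c_{h(P)}(P))$. *)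

(* R is an arbitrary real field; points of R^(n+1) are 'rV[R]_n.+1. *)
From HB Require Import structures.
From mathcomp Require Import all_boot all_order all_algebra.
Set Implicit Arguments. Unset Strict Implicit. Unset Printing Implicit Defensive.
Import Order.TTheory GRing.Theory Num.Theory.
Local Open Scope ring_scope.

Section Defs.
Variables (R : realFieldType) (n : nat).
Notation V := 'rV[R]_n.+1.

Definition pset := V -> Prop.

Definition set_eq (A B : pset) : Prop := forall x, A x <-> B x.

Definition hull (S : pset) : pset := fun x =>
  exists (m : nat) (p : 'I_m -> V) (w : 'I_m -> R),
    (forall i, S (p i)) /\ (forall i, 0 <= w i) /\
    \sum_(i < m) w i = 1 /\ x = \sum_(i < m) w i *: p i.

Definition is_polytope (P : pset) : Prop :=
  exists s : seq V, s != [::] /\ set_eq P (hull (fun x => x \in s)).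

Definition msum (P Q : pset) : pset := fun x =>
  exists p q, P p /\ Q q /\ x = p + q.

Definition lastc (x : V) : R := x 0 ord_max.

Definition is_height (S : pset) (t : R) : Prop :=
  (exists x, S x /\ lastc x = t) /\ (forall x, S x -> t <= lastc x).

Definition ct (t : R) (x : V) : V :=
  \row_(i < n.+1) (if i == ord_max then t else x 0 i).

Definition pimage (f : V -> V) (S : pset) : pset := fun y => exists x, S x /\ y = f x.
Definition punion (A B : pset) : pset := fun x => A x \/ B x.

Definition Sh (P : pset) : pset := fun x =>
  exists t, is_height P t /\ hull (punion P (pimage (ct t) P)) x.

End Defs.

(* As h(P+Q) = h(P) + h(Q)
   and c_{s+t}(x+y) = c_s(x) + c_t(y), the generators of Sh(P+Q) are sums of
   generators of Sh(P) and Sh(Q), giving one inclusion.  For the other it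
   suffices, by convexity, to see that the mixed sums p + c_{h(Q)}(q) lie in
   Sh(P+Q): such a point lies on the vertical segment joining p + q to
   c_{h(P)+h(Q)}(p+q), both of which are generators of Sh(P+Q).  Additivity
   then makes Sh compatible with the relation defining the Grothendieck group. *)
From HB Require Import structures.
From mathcomp Require Import all_boot all_order all_algebra ring.
Set Implicit Arguments. Unset Strict Implicit. Unset Printing Implicit Defensive.
Import Order.TTheory GRing.Theory Num.Theory.
Local Open Scope ring_scope.

Section Shadow.
Variables (R : realFieldType) (n : nat).
Notation V := 'rV[R]_n.+1.
Implicit Types (S T C P Q A B : pset R n) (x y u v p q : V) (s t l : R).

Definition convex C := forall x y l, C x -> C y -> 0 <= l -> l <= 1 ->
  C (l *: x + (1 - l) *: y).

Lemma hull_mono S T : (forall x, S x -> T x) -> forall x, hull S x -> hull T x.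
Proof.
by move=> ST x [m [p [w [Sp [w0 [w1 ->]]]]]]; exists m, p, w; split=> // i; apply: ST.
Qed.

Lemma subset_hull S x : S x -> hull S x.
Proof.
move=> Sx; exists 1%N, (fun _ => x), (fun _ => 1); split=> //; split=> //.
by rewrite !big_ord1 scale1r.
Qed.

Lemma convex_hull S : convex (hull S).
Proof.
move=> _ _ l [m1 [p [a [Sp [a0 [a1 ->]]]]]] [m2 [q [b [Sq [b0 [b1 ->]]]]]] l0 l1.
exists (m1 + m2)%N.
exists (fun k => match split k with inl i => p i | inr j => q j end).
exists (fun k => match split k with inl i => l * a i | inr j => (1 - l) * b j end).
split; first by move=> k; case: (split k).
split; first by move=> k; case: (split k) => i; apply: mulr_ge0; rewrite ?subr_ge0.
have split_l (i : 'I_m1) : split (lshift m2 i) = inl i by apply: (unsplitK (inl i)).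
have split_r (j : 'I_m2) : split (rshift m1 j) = inr j by apply: (unsplitK (inr j)).
rewrite !big_split_ord /=; under eq_bigr do rewrite split_l.
under [X in _ + X = _]eq_bigr do rewrite split_r.
split; first by rewrite -!mulr_sumr a1 b1 !mulr1 addrC subrK.
under [in RHS]eq_bigr do rewrite split_l.
under [X in _ = _ + X]eq_bigr do rewrite split_r.
by rewrite !scaler_sumr; congr (_ + _); apply: eq_bigr => i _; rewrite scalerA.
Qed.

(* Induction on the number of points: split off the last one and rescale the
   remaining weights by their total r, unless r = 0. *)
Lemma hull_min S C : convex C -> (forall x, S x -> C x) -> forall x, hull S x -> C x.
Proof.
move=> cC SC x [m [p [w [Sp [w0 [w1 ->]]]]]].
elim: m p w Sp w0 w1 => [|m IH] p w Sp w0 w1.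
  by move: w1; rewrite big_ord0 => /eqP; rewrite eq_sym oner_eq0.
rewrite big_ord_recr /=; move: w1; rewrite big_ord_recr /= => w1.
set r := \sum_(i < m) w (widen_ord (leqnSn m) i) in w1 *.
have r0 : 0 <= r by apply: sumr_ge0 => i _; apply: w0.
have wl : w ord_max = 1 - r by rewrite -w1 addrC addrK.
have [rz|rnz] := eqVneq r 0.
  have w_eq0 (i : 'I_m) : w (widen_ord (leqnSn m) i) = 0.
    by apply: (psumr_eq0P (fun i _ => w0 _) rz).
  rewrite big1 ?add0r; last by move=> i _; rewrite w_eq0 scale0r.
  by rewrite wl rz subr0 scale1r; apply: SC.
have := IH (fun i => p (widen_ord (leqnSn m) i)) (fun i => w (widen_ord (leqnSn m) i) / r).
move=> /(_ (fun i => Sp _)) /(_ (fun i => divr_ge0 (w0 _) r0)).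
rewrite -mulr_suml -/r mulfV // => /(_ erefl) Cy.
have := cC _ _ r Cy (SC _ (Sp ord_max)) r0.
rewrite -wl -w1 lerDl w0 => /(_ erefl).
rewrite scaler_sumr; congr (C (_ + _)); apply: eq_bigr => i _.
by rewrite scalerA mulrCA mulfV // mulr1.
Qed.

Lemma convex_translate C u : convex C -> convex (fun y => C (u + y)).
Proof.
move=> cC x y l Cx Cy l0 l1.
have -> : u + (l *: x + (1 - l) *: y) = l *: (u + x) + (1 - l) *: (u + y).
  by rewrite !scalerDr addrACA -scalerDl [l + _]addrC subrK scale1r.
exact: cC.
Qed.

Lemma convex_msum A B : convex A -> convex B -> convex (msum A B).
Proof.
move=> cA cB _ _ l [a [b [Aa [Bb ->]]]] [a' [b' [Aa' [Bb' ->]]]] l0 l1.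
exists (l *: a + (1 - l) *: a'), (l *: b + (1 - l) *: b').
by split; [exact: cA | split; [exact: cB | rewrite !scalerDr addrACA]].
Qed.

Lemma hull_msum_min S T C : convex C -> (forall u v, S u -> T v -> C (u + v)) ->
  forall x y, hull S x -> hull T y -> C (x + y).
Proof.
move=> cC STC x y Sx; move: y; apply: hull_min; first exact: convex_translate.
move=> v Tv; rewrite addrC; move: x Sx; apply: hull_min; first exact: convex_translate.
by move=> u Su; rewrite addrC; apply: STC.
Qed.

Lemma lastcD x y : lastc (x + y) = lastc x + lastc y.
Proof. by rewrite /lastc mxE. Qed.

Lemma lastcZ l x : lastc (l *: x) = l * lastc x.
Proof. by rewrite /lastc mxE. Qed.

Lemma ctD s t x y : ct (s + t) (x + y) = ct s x + ct t y.
Proof. by apply/rowP => i; rewrite !mxE; case: ifP. Qed.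

Lemma ct_conv t l x y : ct t (l *: x + (1 - l) *: y) = l *: ct t x + (1 - l) *: ct t y.
Proof. by apply/rowP => i; rewrite !mxE; case: ifP => // _; ring. Qed.

Lemma convex_ct_preimage t C : convex C -> convex (fun x => C (ct t x)).
Proof. by move=> cC x y l Cx Cy l0 l1; rewrite ct_conv; apply: cC. Qed.

Lemma convex_lastc_ge t : convex (fun x => t <= lastc x).
Proof.
move=> x y l hx hy l0 l1; rewrite lastcD !lastcZ.
have -> : t = l * t + (1 - l) * t by ring.
by rewrite lerD // ler_wpM2l // subr_ge0.
Qed.

Lemma is_height_uniq S s t : is_height S s -> is_height S t -> s = t.
Proof. by move=> [[x [Sx <-]] Hs] [[y [Sy <-]] Ht]; apply/eqP; rewrite eq_le Ht // Hs. Qed.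

Lemma seq_lastc_min (s : seq V) : s != [::] ->
  exists2 x, x \in s & forall y, y \in s -> lastc x <= lastc y.
Proof.
elim: s => // a s IH _; have [->|s_neq0] := eqVneq s [::].
  by exists a; rewrite ?mem_seq1 // => y; rewrite mem_seq1 => /eqP ->.
have [b bs b_min] := IH s_neq0; have [ab|ba] := lerP (lastc a) (lastc b).
  exists a; first exact: mem_head.
  by move=> y; rewrite in_cons => /orP [/eqP -> // | /b_min]; apply: le_trans.
exists b; first by rewrite in_cons bs orbT.
by move=> y; rewrite in_cons => /orP [/eqP -> | /b_min //]; apply: ltW.
Qed.

Lemma polytope_height P : is_polytope P -> exists t, is_height P t.
Proof.
move=> [s [s_neq0 Ps]]; have [x xs x_min] := seq_lastc_min s_neq0.
exists (lastc x); split; first by exists x; split=> //; apply/Ps; apply: subset_hull.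
move=> y /Ps; exact: hull_min (convex_lastc_ge (t := lastc x)) x_min y.
Qed.

Lemma is_height_msum P Q s t : is_height P s -> is_height Q t ->
  is_height (msum P Q) (s + t).
Proof.
move=> [[p [Pp <-]] HP] [[q [Qq <-]] HQ]; split.
  by exists (p + q); split; [exists p, q | rewrite lastcD].
by move=> _ [x [y [Px [Qy ->]]]]; rewrite lastcD lerD // ?HP ?HQ.
Qed.

Section Height.
Variables (P : pset R n) (t : R).
Hypothesis HP : is_height P t.

Lemma ShE x : Sh P x <-> hull (punion P (pimage (ct t) P)) x.
Proof.
split; last by exists t.
by move=> [t' [Ht' Px]]; rewrite (is_height_uniq HP Ht').
Qed.

Lemma convex_Sh : convex (Sh P).
Proof. by move=> x y l /ShE Px /ShE Py l0 l1; apply/ShE; apply: convex_hull. Qed.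

Lemma Sh_point x : P x -> Sh P x.
Proof. by move=> Px; apply/ShE; apply: subset_hull; left. Qed.

Lemma Sh_ct x : P x -> Sh P (ct t x).
Proof. by move=> Px; apply/ShE; apply: subset_hull; right; exists x. Qed.

Lemma Sh_hull_min C : convex C -> (forall x, P x -> C x) -> (forall x, P x -> C (ct t x)) ->
  forall x, Sh P x -> C x.
Proof.
move=> cC PC PCct x /ShE; apply: hull_min => // y [Py | [z [Pz ->]]]; auto.
Qed.

End Height.

(* The weight is (lastc p - s) / ((lastc p - s) + (lastc q - t)); if the
   denominator vanishes, p + ct t q = p + q and any weight works. *)
Lemma add_ct_vertical_segment p q s t : s <= lastc p -> t <= lastc q ->
  exists l, [/\ 0 <= l, l <= 1 &
    p + ct t q = l *: (p + q) + (1 - l) *: ct (s + t) (p + q)].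
Proof.
move=> hp hq; set a := lastc p - s; set b := lastc q - t.
have a0 : 0 <= a by rewrite subr_ge0.
have b0 : 0 <= b by rewrite subr_ge0.
have ab0 : 0 <= a + b by apply: addr_ge0.
exists (a / (a + b)); split; first exact: divr_ge0.
  have [->|ab_neq0] := eqVneq (a + b) 0; first by rewrite invr0 mulr0.
  by rewrite ler_pdivrMr ?mul1r ?lerDl // lt_def ab_neq0.
have weightK : a / (a + b) * (a + b) = a.
  have [ab_eq0|ab_neq0] := eqVneq (a + b) 0; last by rewrite mulfVK.
  by move/eqP: ab_eq0; rewrite paddr_eq0 // => /andP [/eqP -> _]; rewrite !mul0r.
move: weightK; move: (a / (a + b)) => l weightK.
apply/rowP => i; rewrite !mxE; case: ifP => [/eqP -> | _]; last by ring.
have -> : p 0 ord_max + q 0 ord_max = (s + t) + (a + b) by rewrite /a /b /lastc; ring.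
by rewrite mulrDr weightK /a /lastc; ring.
Qed.

Lemma Sh_msum_sub P Q s t : is_height P s -> is_height Q t ->
  forall x, Sh (msum P Q) x -> msum (Sh P) (Sh Q) x.
Proof.
move=> HP HQ; apply: (Sh_hull_min (is_height_msum HP HQ)).
- exact: convex_msum (convex_Sh HP) (convex_Sh HQ).
- move=> _ [p [q [Pp [Qq ->]]]]; exists p, q.
  by split; [exact: (Sh_point HP Pp) | split; [exact: (Sh_point HQ Qq) |]].
- move=> _ [p [q [Pp [Qq ->]]]]; exists (ct s p), (ct t q).
  by rewrite ctD; split; [exact: (Sh_ct HP Pp) | split; [exact: (Sh_ct HQ Qq) |]].
Qed.

Lemma msum_Sh_sub P Q s t : is_height P s -> is_height Q t ->
  forall x, msum (Sh P) (Sh Q) x -> Sh (msum P Q) x.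
Proof.
move=> HP HQ _ [x [y [/(ShE HP) Px [/(ShE HQ) Qy ->]]]].
have HPQ := is_height_msum HP HQ.
have PQ_pt u v : P u -> Q v -> Sh (msum P Q) (u + v).
  by move=> Pu Qv; apply: (Sh_point HPQ); exists u, v.
have PQ_ct u v : P u -> Q v -> Sh (msum P Q) (ct (s + t) (u + v)).
  by move=> Pu Qv; apply: (Sh_ct HPQ); exists u, v.
have [_ s_min] := HP; have [_ t_min] := HQ.
apply: hull_msum_min Px Qy; first exact: convex_Sh HPQ.
move=> u v [Pu | [p [Pp ->]]] [Qv | [q [Qq ->]]].
- exact: PQ_pt.
- have [l [l0 l1 ->]] := add_ct_vertical_segment (s_min _ Pu) (t_min _ Qq).
  by apply: convex_Sh HPQ _ _ _ (PQ_pt _ _ Pu Qq) (PQ_ct _ _ Pu Qq) l0 l1.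
- have [l [l0 l1 e]] := add_ct_vertical_segment (t_min _ Qv) (s_min _ Pp).
  rewrite addrC e [v + p]addrC [t + s]addrC.
  by apply: convex_Sh HPQ _ _ _ (PQ_pt _ _ Pp Qv) (PQ_ct _ _ Pp Qv) l0 l1.
- by rewrite -ctD; apply: PQ_ct.
Qed.

Lemma Sh_msum P Q : is_polytope P -> is_polytope Q ->
  set_eq (Sh (msum P Q)) (msum (Sh P) (Sh Q)).
Proof.
move=> /polytope_height [s HP] /polytope_height [t HQ] x.
by split; [apply: Sh_msum_sub HP HQ x | apply: msum_Sh_sub HP HQ x].
Qed.

Lemma Sh_polytope P : is_polytope P -> is_polytope (Sh P).
Proof.
move=> hP; have [t Ht] := polytope_height hP; case: hP => [s [s_neq0 Ps]].
exists (s ++ map (ct t) s); split; first by case: s s_neq0 {Ps}.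
pose T : pset R n := fun x => x \in s ++ map (ct t) s.
move=> z; split.
  apply: (Sh_hull_min Ht); first exact: convex_hull.
    by move=> x /Ps; apply: hull_mono => y ys; rewrite /T mem_cat ys.
  move=> x /Ps; apply: (hull_min (convex_ct_preimage (t := t) (convex_hull (S := T)))).
  by move=> y ys; apply: subset_hull; rewrite /T mem_cat map_f ?orbT.
move=> hz; apply/(ShE Ht); move: z hz; apply: hull_min; first exact: convex_hull.
move=> y; rewrite mem_cat => /orP [ys | /mapP [x xs ->]]; apply: subset_hull.
  by left; apply/Ps; apply: subset_hull.
by right; exists x; split=> //; apply/Ps; apply: subset_hull.
Qed.

Lemma Sh_ext A B : set_eq A B -> set_eq (Sh A) (Sh B).
Proof.
suff Sh_sub A' B' : set_eq A' B' -> forall x, Sh A' x -> Sh B' x.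
  by move=> AB x; split; apply: Sh_sub => // y; rewrite AB.
move=> AB x [t [[[y [Ay yt]] t_min] hx]]; exists t; split.
  by split; [exists y; split=> //; apply/AB | move=> z /AB; apply: t_min].
move: x hx; apply: hull_mono => w [/AB | [v [/AB Av ->]]]; [left | right] => //.
by exists v.
Qed.

End Shadow.

Theorem lemma3p2 (R : realFieldType) (n : nat) :
  (forall P Q : pset R n, is_polytope P -> is_polytope Q ->
     set_eq (Sh (msum P Q)) (msum (Sh P) (Sh Q)))
  /\
  (forall P : pset R n, is_polytope P -> is_polytope (Sh P))
  /\
  (* well-definedness of [P] - [Q] |-> [Sh P] - [Sh Q] on the Grothendieck group *)
  (forall P Q P' Q' : pset R n,
     is_polytope P -> is_polytope Q -> is_polytope P' -> is_polytope Q' ->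
     set_eq (msum P Q') (msum P' Q) ->
     set_eq (msum (Sh P) (Sh Q')) (msum (Sh P') (Sh Q))).
Proof.
split; first exact: Sh_msum.
split; first exact: Sh_polytope.
move=> P Q P' Q' hP hQ hP' hQ' PQ'_P'Q x.
rewrite -(Sh_msum hP hQ') -(Sh_msum hP' hQ).
exact: Sh_ext.
Qed.
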